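(* Let $\Omega\subset\mathbb{R}^2$ be open and bounded with Lipschitz boundary, let $f\in L^2(\Omega)$ be not identically zero, and for $\lambda_1,\lambda_2>0$ let $(u^*,v^* )=(u^*_{\lambda_1,\lambda_2},v^*_{\lambda_1,\lambda_2})\in BV(\Omega)\times L^2(\Omega)$ be an optimal pair for $$\min_{u\in BV(\Omega),\,v\in L^2(\Omega)}\Big\{|Du|(\Omega)+\lambda_1\|v\|_{L^1(\Omega)}+\frac{\lambda_2}{2}\|f-u-v\|_{L^2(\Omega)}^2\Big\}.$$ Then: (i) for fixed finite $\lambda_2$, $v^*\to0$ in $L^1(\Omega)$ as $\lambda_1\to+\infty$; (ii) for fixed finite $\lambda_1$, $v^*\to f-u^*$ in $L^2(\Omega)$ (i.e. $\|f-u^*-v^*\|_{L^2(\Omega)}\to0$) as $\lambda_2\to+\infty$; (iii) if additionally $f\in BV(\Omega)$ and $f$ is not constant, then $(u^*,v^* )\to(f,0)$ in $L^1(\Omega)\times L^1(\Omega)$ as $\lambda_1,\lambda_2\to+\infty$.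
   Context: $|Du|(\Omega)$ denotes the total variation of $u$ and $BV(\Omega)$ the space of functions of bounded variation. *)

From HB Require Import structures.
From mathcomp Require Import all_boot all_order all_algebra.
From mathcomp Require Import all_classical all_reals all_analysis.
Set Implicit Arguments. Unset Strict Implicit. Unset Printing Implicit Defensive.
Import Order.TTheory GRing.Theory Num.Theory.
Import numFieldNormedType.Exports.
Local Open Scope classical_set_scope.
Local Open Scope ring_scope.

Definition leb2 (R : realType) := ((@lebesgue_measure R) \x (@lebesgue_measure R))%E.

Section Defs.
Variable R : realType.
Implicit Types (O : set (R * R)) (u v f g : R * R -> R).

Definition enorm2 (p : R * R) : R := Num.sqrt (p.1 ^+ 2 + p.2 ^+ 2).

Definition eball2 (c : R * R) (r : R) : set (R * R) :=
  [set p | enorm2 (p.1 - c.1, p.2 - c.2) < r].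

Definition rot2 (th : R) (p : R * R) : R * R :=
  (cos th * p.1 + sin th * p.2, - sin th * p.1 + cos th * p.2).

Definition lipschitz_fun (g : R -> R) : Prop :=
  exists L : R, forall s t, `|g s - g t| <= L * `|s - t|.

(* Lipschitz boundary: near each boundary point, after a rotation of
   coordinates, O is the (strict) epigraph of a Lipschitz function. *)
Definition lipschitz_boundary O : Prop :=
  forall x, (closure O `\` O) x ->
  exists (th r : R) (g : R -> R), 0 < r /\ lipschitz_fun g /\
    forall y, eball2 x r y -> (O y <-> g (rot2 th y).1 < (rot2 th y).2).

Definition d1 (phi : R * R -> R) (x : R * R) : R := 'D_((1, 0) : R * R) phi x.
Definition d2 (phi : R * R -> R) (x : R * R) : R := 'D_((0, 1) : R * R) phi x.

Definition C1 (phi : R * R -> R) : Prop :=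
  (forall x, differentiable phi x) /\ continuous (d1 phi) /\ continuous (d2 phi).

Definition compact_support_in O (phi : R * R -> R) : Prop :=
  exists K : set (R * R), compact K /\ K `<=` O /\ (forall x, ~ K x -> phi x = 0).

Definition test_field O (phi1 phi2 : R * R -> R) : Prop :=
  C1 phi1 /\ C1 phi2 /\ compact_support_in O phi1 /\ compact_support_in O phi2 /\
  (forall x, phi1 x ^+ 2 + phi2 x ^+ 2 <= 1).

Definition total_variation O u : \bar R :=
  ereal_sup [set r : \bar R | exists phi1 phi2 : R * R -> R,
     test_field O phi1 phi2 /\
     r = (\int[@leb2 R]_(x in O) (u x * (d1 phi1 x + d2 phi2 x))%:E)%E].

Definition L1 O u : Prop := (@leb2 R).-integrable O (fun x => (u x)%:E).

Definition L2 O v : Prop :=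
  measurable_fun O v /\ (\int[@leb2 R]_(x in O) ((v x) ^+ 2)%:E < +oo)%E.

Definition BV O u : Prop := L1 O u /\ (total_variation O u < +oo)%E.

Definition energy O f (l1 l2 : R) u v : \bar R :=
  (total_variation O u
   + l1%:E * \int[@leb2 R]_(x in O) (`|v x|)%:E
   + (l2 / 2)%:E * \int[@leb2 R]_(x in O) ((f x - u x - v x) ^+ 2)%:E)%E.

Definition optimal_pair O f (l1 l2 : R) u v : Prop :=
  BV O u /\ L2 O v /\
  forall u' v', BV O u' -> L2 O v' -> (energy O f l1 l2 u v <= energy O f l1 l2 u' v')%E.

Definition L1norm O g : \bar R := (\int[@leb2 R]_(x in O) (`|g x|)%:E)%E.
Definition L2norm2 O g : \bar R := (\int[@leb2 R]_(x in O) ((g x) ^+ 2)%:E)%E.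

End Defs.

From Pilot Require Import Defs.
From HB Require Import structures.
From mathcomp Require Import all_boot all_order all_algebra.
From mathcomp Require Import all_classical all_reals all_analysis.
From mathcomp Require Import measurable_realfun ring lra.
Import Order.TTheory GRing.Theory Num.Theory.
Import numFieldNormedType.Exports.
Local Open Scope classical_set_scope.
Local Open Scope ring_scope.

(* All three terms of the energy are nonnegative, so at an optimal pair (u, v)
   each weighted term is at most the energy of any admissible competitor.
   Comparing with (0, 0), with (0, f) and, when f is in BV, with (f, 0) gives
     ||v||_1 <= l2 ||f||_2^2 / (2 l1),    ||f - u - v||_2^2 <= 2 l1 ||f||_1 / l2,
     ||v||_1 <= |Df|(O) / l1,             ||f - u - v||_2^2 <= 2 |Df|(O) / l2.
   On the bounded set O the pointwise bound |g| <= a / 2 + g^2 / (2 a) turns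
   L^2 bounds into L^1 bounds, and ||u - f||_1 <= ||v||_1 + ||f - u - v||_1. *)

Set Implicit Arguments.
Unset Strict Implicit.

Lemma div_lt_eventually (R : realFieldType) (C eps : R) : 0 < eps ->
  exists M : R, forall l, 0 < l -> M < l -> C / l < eps.
Proof.
move=> eps0; exists (C / eps) => l l0.
by rewrite !ltr_pdivrMr // mulrC.
Qed.

Section integral_bounds.
Context d (T : measurableType d) (R : realType) (mu : {measure set T -> \bar R}).
Variables (D : set T) (mD : measurable D).
Local Open Scope ereal_scope.

Lemma integral_abs_le_measure_sqr (g : T -> R) (a : R) :
  measurable_fun D g -> (0 < a)%R ->
  \int[mu]_(x in D) `|g x|%:E <=
    (a / 2)%:E * mu D + (a^-1 / 2)%:E * \int[mu]_(x in D) (g x ^+ 2)%:E.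
Proof.
move=> mg a0.
have mg2 : measurable_fun D (fun x => (g x ^+ 2)%:E).
  by apply/measurable_EFinP; exact: measurable_funX.
have g2_ge0 (x : T) : D x -> 0 <= (g x ^+ 2)%:E by move=> _; rewrite lee_fin sqr_ge0.
have ia : (0 <= a^-1 / 2)%R by rewrite divr_ge0 // invr_ge0 ltW.
rewrite -integral_cst // -(ge0_integralZl mu mD mg2 g2_ge0) ?lee_fin //.
rewrite -ge0_integralD //; last 3 first.
- by move=> x _; rewrite lee_fin; lra.
- by move=> x _; rewrite -EFinM lee_fin mulr_ge0 // sqr_ge0.
- exact: measurable_funeM.
apply: ge0_le_integral => //.
- by apply/measurable_EFinP; apply: measurableT_comp.
- by apply: emeasurable_funD => //; exact: measurable_funeM.
move=> x _; rewrite -EFinM -EFinD lee_fin.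
rewrite -[(g x ^+ 2)%R](real_normK (num_real (g x))) -subr_ge0.
have -> : (a / 2 + a^-1 / 2 * `|g x| ^+ 2 - `|g x| = a^-1 / 2 * (a - `|g x|) ^+ 2)%R.
  by field; lra.
by rewrite mulr_ge0 // sqr_ge0.
Qed.

Lemma integral_normD_le (g h : T -> R) :
  measurable_fun D g -> measurable_fun D h ->
  \int[mu]_(x in D) `|g x + h x|%:E <=
    \int[mu]_(x in D) `|g x|%:E + \int[mu]_(x in D) `|h x|%:E.
Proof.
move=> mg mh.
have mnorm (k : T -> R) : measurable_fun D k -> measurable_fun D (fun x => `|k x|%:E).
  by move=> mk; apply/measurable_EFinP; exact: measurableT_comp.
rewrite -ge0_integralD //; [|by move=> *; rewrite lee_fin..|exact: mnorm|exact: mnorm].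
apply: ge0_le_integral => //.
- by apply: mnorm; exact: measurable_funD.
- by apply: emeasurable_funD; exact: mnorm.
- by move=> x _; rewrite -EFinD lee_fin ler_normD.
Qed.

End integral_bounds.

Section plane.
Variable R : realType.
Implicit Types O : set (R * R).

Definition rat_rect (q : (rat * rat) * (rat * rat)) : set (R * R) :=
  `](ratr q.1.1 : R), ratr q.1.2[ `*` `](ratr q.2.1 : R), ratr q.2.2[.

(* An open set is the countable union of the rational rectangles it contains. *)
Lemma open_measurableR2 O : open O -> measurable O.
Proof.
move=> oO.
have -> : O = \bigcup_q (if pselect (rat_rect q `<=` O) is left _ then rat_rect q else set0).
  apply/seteqP; split => [x Ox|x [q _]]; last by case: pselect => // sub /sub.
  have /nbhs_ballP [e /= e0 be] : nbhs x O by move: oO; rewrite openE => /(_ _ Ox).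
  have ratP (c : R) : exists q : rat, ratr q \in `]c, c + e[ by apply: rat_in_itvoo; lra.
  have [a] := ratP (x.1 - e); have [b] := ratP x.1.
  have [c] := ratP (x.2 - e); have [d] := ratP x.2.
  rewrite !in_itv /= => /andP[d1 d2] /andP[c1 c2] /andP[b1 b2] /andP[a1 a2].
  have sub : rat_rect ((a, b), (c, d)) `<=` O.
    move=> y; rewrite /rat_rect /= !in_itv /= => -[/andP[y1 y2] /andP[y3 y4]].
    by apply: be; split; rewrite /ball /= ltr_norml; apply/andP; split; lra.
  exists ((a, b), (c, d)) => //; case: pselect => // _.
  by rewrite /rat_rect /= !in_itv /=; split; apply/andP; split; lra.
apply: countable_bigcupT_measurable; first exact: countableP.
by move=> q; case: pselect => _ //; apply: measurableX; exact: measurable_itv.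
Qed.

Lemma bounded_set_leb2_lty O : measurable O -> bounded_set O -> (@leb2 R O < +oo)%E.
Proof.
move=> mO [M [_ HM]]; set N := `|M| + 1.
have /HM ON : M < N by have := ler_norm M; rewrite /N; lra.
pose I : set R := `[- N, N]%classic.
have mI : measurable I by exact: measurable_itv.
have OII : O `<=` I `*` I.
  move=> x /ON /= le_xN.
  by split; rewrite /I /= in_itv /= -ler_norml; apply: le_trans le_xN;
    rewrite le_max lexx ?orbT.
have le_OII : (@leb2 R O <= @leb2 R (I `*` I))%E.
  by apply: le_measure; rewrite ?inE //; exact: measurableX.
have leb2_II : @leb2 R (I `*` I) = (lebesgue_measure I * lebesgue_measure I)%E.
  exact: product_measure1E.
apply: le_lt_trans le_OII _; rewrite leb2_II /I lebesgue_measure_itv /=.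
by case: ifP => _; rewrite -?EFinD -?EFinM ?mul0e ?ltry.
Qed.
End plane.

Section energy.
Variables (R : realType) (O : set (R * R)) (f : R * R -> R).
Local Open Scope ereal_scope.

Lemma d1_cst0 : d1 (fun _ : R * R => 0%R) = fun=> 0%R.
Proof. by apply/funext => x; exact: derive_cst. Qed.

Lemma d2_cst0 : d2 (fun _ : R * R => 0%R) = fun=> 0%R.
Proof. by apply/funext => x; exact: derive_cst. Qed.

Lemma test_field0 : test_field O (fun=> 0%R) (fun=> 0%R).
Proof.
have C10 : C1 (fun _ : R * R => 0%R).
  split; first by move=> x; exact: differentiable_cst.
  by rewrite d1_cst0 d2_cst0; split; exact: cst_continuous.
have cs : compact_support_in O (fun=> 0%R) by exists set0; split; [exact: compact0 | split].
by do 4!split => //; move=> x; rewrite expr0n addr0.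
Qed.

Lemma total_variation_ge0 u : 0 <= Defs.total_variation O u.
Proof.
apply: ereal_sup_ubound; exists (fun=> 0%R), (fun=> 0%R); split; first exact: test_field0.
rewrite d1_cst0 d2_cst0; under eq_integral do rewrite addr0 mulr0.
by rewrite integral0.
Qed.

Lemma total_variation0 : Defs.total_variation O (fun=> 0%R) = 0.
Proof.
apply/eqP; rewrite eq_le total_variation_ge0 andbT.
apply/ereal_supP => _ [phi1 [phi2 [_ ->]]].
by under eq_integral do rewrite mul0r; rewrite integral0.
Qed.

Lemma BV0 : BV O (fun=> 0%R).
Proof. by split; [exact: integrable0 | rewrite total_variation0]. Qed.

Lemma L20 : L2 O (fun=> 0%R).
Proof.
split; first exact: measurable_cst.
by under eq_integral do rewrite expr0n; rewrite integral0.
Qed.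

Lemma energy00 l1 l2 : energy O f l1 l2 (fun=> 0%R) (fun=> 0%R) = (l2 / 2)%:E * L2norm2 O f.
Proof.
rewrite /energy total_variation0 add0e.
under eq_integral do rewrite normr0; rewrite integral0 mule0 add0e.
by under eq_integral do rewrite !subr0.
Qed.

Lemma energy0f l1 l2 : energy O f l1 l2 (fun=> 0%R) f = l1%:E * L1norm O f.
Proof.
rewrite /energy total_variation0 add0e.
under [X in _ + _ * X]eq_integral do rewrite subr0 subrr expr0n.
by rewrite integral0 mule0 adde0.
Qed.

Lemma energyf0 l1 l2 : energy O f l1 l2 f (fun=> 0%R) = Defs.total_variation O f.
Proof.
rewrite /energy; under eq_integral do rewrite normr0; rewrite integral0 mule0 adde0.
by under eq_integral do rewrite subrr subr0 expr0n; rewrite integral0 mule0 adde0.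
Qed.

Lemma L1norm_ge0 g : 0 <= L1norm O g.
Proof. by apply: integral_ge0 => x _; rewrite lee_fin. Qed.

Lemma L2norm2_ge0 g : 0 <= L2norm2 O g.
Proof. by apply: integral_ge0 => x _; rewrite lee_fin sqr_ge0. Qed.

Lemma optimal_pair_bounds l1 l2 u v u' v' (r : R) : (0 < l1)%R -> (0 < l2)%R ->
  optimal_pair O f l1 l2 u v -> BV O u' -> L2 O v' ->
  energy O f l1 l2 u' v' <= r%:E ->
  L1norm O v <= (r / l1)%:E /\
  L2norm2 O (fun x => f x - u x - v x)%R <= (2 * r / l2)%:E.
Proof.
move=> l10 l20 [_ [_ opt]] BVu' L2v' /(le_trans (opt _ _ BVu' L2v')).
rewrite /energy -/(L1norm O v) -/(L2norm2 O _).
have := total_variation_ge0 u; have := L1norm_ge0 v.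
have := L2norm2_ge0 (fun x => f x - u x - v x)%R.
set TV := Defs.total_variation O u; set a := L1norm O v; set b := L2norm2 O _.
move=> b0 a0 TV0 le_r.
have l1a0 : 0 <= l1%:E * a by rewrite mule_ge0 // lee_fin ltW.
have l2b0 : 0 <= (l2 / 2)%:E * b by rewrite mule_ge0 // lee_fin divr_ge0 // ltW.
split.
- rewrite mulrC EFinM lee_pdivlMl //; apply: le_trans le_r.
  by apply: lee_paddr => //; exact: lee_paddl.
- rewrite (mulrC 2%R) -mulrA -invf_div mulrC EFinM lee_pdivlMl ?divr_gt0 //.
  apply: le_trans le_r.
  by apply: lee_paddl => //; exact: adde_ge0.
Qed.

End energy.

Section regularization_limits.
Variables (R : realType) (O : set (R * R)) (f : R * R -> R).
Hypotheses (mO : measurable O) (O_lty : (@leb2 R O < +oo)%E) (L2f : L2 O f).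
Local Open Scope ereal_scope.

Let m := fine (@leb2 R O).
Let F := fine (L2norm2 O f).

Let leb2E : @leb2 R O = m%:E.
Proof. by rewrite fineK // ge0_fin_numE // measure_ge0. Qed.

Let L2norm2fE : L2norm2 O f = F%:E.
Proof. by rewrite fineK // ge0_fin_numE ?L2norm2_ge0 //; case: L2f. Qed.

Lemma L1norm_le_measure_L2norm2 : L1norm O f <= ((m + F) / 2)%R%:E.
Proof.
apply: le_trans (integral_abs_le_measure_sqr (@leb2 R) mO L2f.1 ltr01) _.
rewrite -[X in _ * X + _]/(@leb2 R O) -/(L2norm2 O f) leb2E L2norm2fE.
by rewrite invr1 -!EFinM -EFinD lee_fin; lra.
Qed.

Lemma optimal_v_L1norm_vanishes l2 : (0 < l2)%R ->
  forall eps : R, (0 < eps)%R -> exists M : R,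
    forall l1 u v, (0 < l1)%R -> (M < l1)%R ->
      optimal_pair O f l1 l2 u v -> L1norm O v < eps%:E.
Proof.
move=> l20 eps e0; have [M ltM] := div_lt_eventually (l2 / 2 * F) e0.
exists M => l1 u v l10 Ml1 opt.
have E00 : energy O f l1 l2 (fun=> 0%R) (fun=> 0%R) <= (l2 / 2 * F)%:E.
  by rewrite energy00 L2norm2fE EFinM.
have [le_v _] := optimal_pair_bounds l10 l20 opt (BV0 O) (L20 O) E00.
by apply: le_lt_trans le_v _; rewrite lte_fin ltM.
Qed.

Lemma optimal_residual_L2norm2_vanishes l1 : (0 < l1)%R ->
  forall eps : R, (0 < eps)%R -> exists M : R,
    forall l2 u v, (0 < l2)%R -> (M < l2)%R ->
      optimal_pair O f l1 l2 u v -> L2norm2 O (fun x => f x - u x - v x)%R < eps%:E.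
Proof.
move=> l10 eps e0; set K := ((m + F) / 2)%R.
have [M ltM] := div_lt_eventually (2 * (l1 * K)) e0.
exists M => l2 u v l20 Ml2 opt.
have E0f : energy O f l1 l2 (fun=> 0%R) f <= (l1 * K)%:E.
  by rewrite energy0f EFinM lee_pmul2l ?lte_fin //; exact: L1norm_le_measure_L2norm2.
have [_ le_res] := optimal_pair_bounds l10 l20 opt (BV0 O) L2f E0f.
by apply: le_lt_trans le_res _; rewrite lte_fin ltM.
Qed.

Section bv_datum.
Hypothesis BVf : BV O f.

Let T := fine (Defs.total_variation O f).

Let TVfE : Defs.total_variation O f = T%:E.
Proof. by rewrite fineK // ge0_fin_numE ?total_variation_ge0 //; case: BVf. Qed.

Let optimal_pair_bounds_f l1 l2 u v : (0 < l1)%R -> (0 < l2)%R ->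
  optimal_pair O f l1 l2 u v ->
  L1norm O v <= (T / l1)%:E /\
  L2norm2 O (fun x => f x - u x - v x)%R <= (2 * T / l2)%:E.
Proof.
move=> l10 l20 opt; apply: optimal_pair_bounds l10 l20 opt BVf (L20 O) _.
by rewrite energyf0 TVfE.
Qed.

Lemma L1norm_optimal_subf_le a l1 l2 u v : (0 < a)%R -> (0 < l1)%R -> (0 < l2)%R ->
  optimal_pair O f l1 l2 u v ->
  L1norm O (fun x => u x - f x)%R <= (T / l1 + (a / 2 * m + T / a / l2))%:E.
Proof.
move=> a0 l10 l20 opt; have [le_v le_res] := optimal_pair_bounds_f l10 l20 opt.
have mu : measurable_fun O u by case: opt => -[/measurable_int/measurable_EFinP].
have mv : measurable_fun O v by case: opt => _ [[]].
have mres : measurable_fun O (fun x => f x - u x - v x)%R.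
  by apply: measurable_funB => //; apply: measurable_funB => //; case: L2f.
have -> : L1norm O (fun x => u x - f x)%R =
    \int[@leb2 R]_(x in O) `|v x + (f x - u x - v x)|%R%:E.
  by apply: eq_integral => x _; rewrite distrC; congr (`|_|%:E); ring.
apply: le_trans (integral_normD_le (@leb2 R) mO mv mres) _; rewrite EFinD leeD //.
apply: le_trans (integral_abs_le_measure_sqr (@leb2 R) mO mres a0) _.
rewrite -[X in _ * X + _]/(@leb2 R O) leb2E EFinD -EFinM leeD2l //.
rewrite (_ : T / a / l2 = a^-1 / 2 * (2 * T / l2))%R; last by field; lra.
by rewrite [X in _ <= X]EFinM lee_wpmul2l // lee_fin divr_ge0 // invr_ge0 ltW.
Qed.

Lemma optimal_pair_L1_cvg_f0 (eps : R) : (0 < eps)%R -> exists M : R,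
  forall l1 l2 u v, (0 < l1)%R -> (0 < l2)%R -> (M < l1)%R -> (M < l2)%R ->
    optimal_pair O f l1 l2 u v ->
    L1norm O (fun x => u x - f x)%R < eps%:E /\ L1norm O v < eps%:E.
Proof.
move=> e0; have m0 : (0 <= m)%R by rewrite fine_ge0 // measure_ge0.
(* the AM-GM scale a makes the measure term a m / 2 smaller than eps / 4 *)
set a := (eps / (2 * (m + 1)))%R.
have a0 : (0 < a)%R by rewrite divr_gt0 // mulr_gt0 //; lra.
have am : (a / 2 * m < eps / 4)%R.
  have : (a * (m + 1) = eps / 2)%R by rewrite /a; field; lra.
  by nra.
have [M1 ltM1] : exists M, forall l, (0 < l)%R -> (M < l)%R -> (T / l < eps / 2)%R.
  by apply: div_lt_eventually; lra.
have [M2 ltM2] : exists M, forall l, (0 < l)%R -> (M < l)%R -> (T / a / l < eps / 4)%R.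
  by apply: div_lt_eventually; lra.
exists (Num.max M1 M2) => l1 l2 u v l10 l20.
rewrite !gt_max => /andP[M1l1 _] /andP[_ M2l2] opt.
have [le_v _] := optimal_pair_bounds_f l10 l20 opt.
have lt1 := ltM1 _ l10 M1l1; have lt2 := ltM2 _ l20 M2l2; split.
- apply: le_lt_trans (L1norm_optimal_subf_le a0 l10 l20 opt) _.
  by rewrite lte_fin; lra.
- by apply: le_lt_trans le_v _; rewrite lte_fin; lra.
Qed.

End bv_datum.
End regularization_limits.

Unset Implicit Arguments.

Theorem proposition5p1 (R : realType) (O : set (R * R)) (f : R * R -> R) :
  open O -> bounded_set O -> lipschitz_boundary O ->
  L2 O f ->
  ~ (@leb2 R).-negligible (O `&` [set x | f x != 0]) ->
  (
   (* (i) lambda2 fixed, lambda1 -> +oo : v -> 0 in L^1 *)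
   (forall l2 : R, 0 < l2 ->
      forall eps : R, 0 < eps -> exists M : R,
        forall (l1 : R) (u v : R * R -> R), 0 < l1 -> M < l1 ->
          optimal_pair O f l1 l2 u v -> (L1norm O v < eps%:E)%E) /\
   (* (ii) lambda1 fixed, lambda2 -> +oo : ||f - u - v||_{L^2} -> 0 *)
   (forall l1 : R, 0 < l1 ->
      forall eps : R, 0 < eps -> exists M : R,
        forall (l2 : R) (u v : R * R -> R), 0 < l2 -> M < l2 ->
          optimal_pair O f l1 l2 u v ->
          (L2norm2 O (fun x => (f x - u x - v x)%R) < eps%:E)%E) /\
   (* (iii) f in BV, f not constant, lambda1, lambda2 -> +oo : (u, v) -> (f, 0) in L^1 x L^1 *)
   (BV O f ->
    (forall c : R, ~ (@leb2 R).-negligible (O `&` [set x | f x != c])) ->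
    forall eps : R, 0 < eps -> exists M : R,
      forall (l1 l2 : R) (u v : R * R -> R), 0 < l1 -> 0 < l2 -> M < l1 -> M < l2 ->
        optimal_pair O f l1 l2 u v ->
        (L1norm O (fun x => (u x - f x)%R) < eps%:E)%E /\ (L1norm O v < eps%:E)%E)).
Proof.
move=> oO bO _ L2f _.
have mO := open_measurableR2 oO.
have O_lty := bounded_set_leb2_lty mO bO.
split; first exact: optimal_v_L1norm_vanishes.
split; first exact: optimal_residual_L2norm2_vanishes.
by move=> BVf _ eps; exact: optimal_pair_L1_cvg_f0.
Qed.
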